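(* Consider an $N$-player distributionally robust game (as defined in the context) with player risk levels $\varepsilon_i\in(0,1]$ and ambiguity set $$\mathcal{F} = \{ Q : Q[\mathbf{W}\cdot\mathrm{vec}(\tilde{\mathbf{P}})\le\mathbf{h}] = 1,\ \mathbb{E}_Q[\mathrm{vec}\,\tilde{\mathbf{P}}] = \mathbf{m},\ \mathbb{E}_Q[\|\mathrm{vec}(\tilde{\mathbf{P}})-\mathbf{m}\|_1]\le s\},$$ where $\{\mathbf{P}:\mathbf{W}\mathrm{vec}(\mathbf{P})\le\mathbf{h}\}$ is a bounded polyhedral set containing $\mathbf{m}$, and with $s=0$. Then its set of Distributionally Robust Optimization Equilibria equals the set of Nash equilibria of the complete information game with fixed payoff matrix $\mathbf{M}$, where $\mathrm{vec}(\mathbf{M})=\mathbf{m}$.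
   Context: A finite $N$-player game: player $i$ has actions $\{1,\dots,a_i\}$ and mixed strategy set $S_{a_i} = \{\mathbf{x}^i\in\mathbb{R}^{a_i} : \mathbf{x}^i\ge 0,\ \sum_{j=1}^{a_i} x^i_j = 1\}$; $S=\prod_{i} S_{a_i}$. A payoff matrix $\mathbf{P}\in\mathbb{R}^{N\times\prod_{k=1}^N a_k}$ has entries $\mathbf{P}^i_{(j_1,\dots,j_N)}$, the payoff to player $i$ when each player $k$ plays action $j_k$. The expected payoff is $\pi_i(\mathbf{P};\mathbf{x}^1,\dots,\mathbf{x}^N) = \sum_{j_1=1}^{a_1}\cdots\sum_{j_N=1}^{a_N}\mathbf{P}^i_{(j_1,\dots,j_N)}\prod_{k=1}^N x^k_{j_k}$. Write $\mathbf{x}^{-i}$ for the strategies of all players except $i$, and $(\mathbf{x}^{-i},\mathbf{u}^i)$ for the profile with $\mathbf{x}^i$ replaced by $\mathbf{u}^i$. $\mathrm{vec}(\mathbf{A})$ is the column vector obtained by stacking the rows of $\mathbf{A}$. $\tilde{\mathbf{P}}$ denotes a random payoff matrix. For a loss random variable $L$ and $\varepsilon\in(0,1]$, $Q\text{-CVaR}_\varepsilon(L) = \min_{\zeta\in\mathbb{R}} \zeta + \frac{1}{\varepsilon}\mathbb{E}_Q[L-\zeta]^+$, with $[x]^+=\max\{x,0\}$. Distributionally robust game: commonly known ambiguity set $\mathcal{F}$ of distributions $Q$ of $\tilde{\mathbf{P}}$ and risk levels $\varepsilon_i\in(0,1]$. A profile $(\mathbf{x}^1,\dots,\mathbf{x}^N)\in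 S$ is a Distributionally Robust Optimization Equilibrium iff for every $i$, $\mathbf{x}^i\in\arg\min_{\mathbf{u}^i\in S_{a_i}}\sup_{Q\in\mathcal{F}} Q\text{-CVaR}_{\varepsilon_i}[-\pi_i(\tilde{\mathbf{P}};\mathbf{x}^{-i},\mathbf{u}^i)]$. A Nash equilibrium of the game with fixed payoff matrix $\check{\mathbf{P}}$ is a profile in $S$ with $\mathbf{x}^i\in\arg\max_{\mathbf{u}^i\in S_{a_i}}\pi_i(\check{\mathbf{P}};\mathbf{x}^{-i},\mathbf{u}^i)$ for every $i$. *)

From HB Require Import structures.
From mathcomp Require Import all_boot all_order all_algebra.
From mathcomp Require Import all_classical all_reals all_analysis.
Set Implicit Arguments. Unset Strict Implicit. Unset Printing Implicit Defensive.
Import Order.TTheory GRing.Theory Num.Theory.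
Local Open Scope classical_set_scope.
Local Open Scope ring_scope.

Section DRGame.
Variable R : realType.
Variable N : nat.
(* a i = number of actions of player i; actions of player i are 'I_(a i) *)
Variable a : 'I_N -> nat.

Definition prof := {dffun forall i : 'I_N, 'I_(a i)}.

Definition ncols := #|{: prof}|.
Definition vlen := (N * ncols)%N.

(* payoff matrix P in R^{N x prod a_k}; column of profile j is enum_rank j *)
Definition payoff_mx := 'M[R]_(N, ncols).
Definition Pentry (P : payoff_mx) (i : 'I_N) (j : prof) : R := P i (enum_rank j).

Definition strat := forall i : 'I_N, 'I_(a i) -> R.

Definition in_simplex (i : 'I_N) (u : 'I_(a i) -> R) : Prop :=
  (forall j, 0 <= u j) /\ \sum_(j < a i) u j = 1.

Definition in_S (x : strat) : Prop := forall i, in_simplex (x i).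

Definition exp_payoff (P : payoff_mx) (i : 'I_N) (x : strat) : R :=
  \sum_(j : prof) Pentry P i j * \prod_(k < N) x k (j k).

Definition replace (x : strat) (i : 'I_N) (u : 'I_(a i) -> R) : strat :=
  @dfwith _ (fun k : 'I_N => 'I_(a k) -> R) x i u.

(* the random vector vec(P~) takes values in vlen.-tuple R (product Borel
   sigma-algebra); these convert between tuples, row vectors and matrices.
   vec = mxvec stacks the rows. *)
Definition tuple_row (t : vlen.-tuple R) : 'rV[R]_vlen := \row_k tnth t k.
Definition mx_of_tuple (t : vlen.-tuple R) : payoff_mx := vec_mx (tuple_row t).

Definition CVaR (Q : probability (vlen.-tuple R) R) (eps : R)
    (L : vlen.-tuple R -> R) : \bar R :=
  ereal_inf [set (zeta%:E + (eps^-1)%:E * \int[Q]_t (Num.max (L t - zeta) 0)%:E)%E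
            | zeta in [set: R]].

Definition in_polyhedron (nr : nat) (W : 'M[R]_(nr, vlen)) (h : 'cV[R]_nr)
    (v : 'rV[R]_vlen) : Prop :=
  forall r, (W *m v^T) r 0 <= h r 0.

Definition ambiguity_set (nr : nat) (W : 'M[R]_(nr, vlen)) (h : 'cV[R]_nr)
    (m : 'rV[R]_vlen) (s : R) : set (probability (vlen.-tuple R) R) :=
  [set Q | [/\ Q [set t | in_polyhedron W h (tuple_row t)] = 1%E,
     (forall k, Q.-integrable [set: vlen.-tuple R] (fun t => (tnth t k)%:E)
                /\ (\int[Q]_t (tnth t k)%:E = (m 0 k)%:E)%E) &
     (\int[Q]_t (\sum_(k < vlen) `|tnth t k - m 0 k|)%:E <= s%:E)%E ]].

Definition worst_CVaR (F : set (probability (vlen.-tuple R) R)) (eps : R)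
    (i : 'I_N) (y : strat) : \bar R :=
  ereal_sup [set CVaR Q eps (fun t => - exp_payoff (mx_of_tuple t) i y) | Q in F].

Definition is_DROE (F : set (probability (vlen.-tuple R) R)) (eps : 'I_N -> R)
    (x : strat) : Prop :=
  in_S x /\ forall i (u : 'I_(a i) -> R), in_simplex u ->
    (worst_CVaR F (eps i) i x <= worst_CVaR F (eps i) i (replace x u))%E.

Definition is_Nash (P : payoff_mx) (x : strat) : Prop :=
  in_S x /\ forall i (u : 'I_(a i) -> R), in_simplex u ->
    exp_payoff P i (replace x u) <= exp_payoff P i x.

End DRGame.

From HB Require Import structures.
From mathcomp Require Import all_boot all_order all_algebra.
From mathcomp Require Import all_classical all_reals all_analysis.
From mathcomp Require Import measurable_realfun.
Import Order.TTheory GRing.Theory Num.Theory.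
Local Open Scope ring_scope.

(* With spread s = 0, every Q in the ambiguity set has E_Q ||vec P~ - m||_1 = 0,
   so Q is concentrated at m and every CVaR collapses to the deterministic loss
   at m; conversely the Dirac mass at m lies in the set. Hence each player's
   worst-case CVaR is -pi_i(M; .), and the equilibrium conditions coincide. *)

Lemma le_add_scaled_excess (R : realFieldType) (eps c z : R) :
  0 < eps <= 1 -> c <= z + eps^-1 * Num.max (c - z) 0.
Proof.
case/andP=> eps_gt0 eps_le1; have [zc|cz] := leP 0 (c - z).
  by rewrite -{1}(subrK z c) addrC lerD2l ler_peMl // invf_ge1.
by rewrite mulr0 addr0 -subr_le0 ltW.
Qed.

Section ConcentratedProbability.
Variables (d : measure_display) (T : measurableType d) (R : realType).
Variables (Q : probability T R) (g : T -> R) (t0 : T).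
Hypotheses (mg : measurable_fun [set: T] g) (g_ge0 : forall t, 0 <= g t).
Hypothesis g_eq0 : forall t, g t = 0 -> t = t0.
Hypothesis int_g_le0 : (\int[Q]_t (g t)%:E <= 0%:E)%E.

Lemma ae_eq_concentrated : {ae Q, forall t, t = t0}.
Proof.
have int_abs_g : (\int[Q]_t `|(g t)%:E| = 0)%E.
  apply/eqP; rewrite eq_le integral_ge0 ?andbT; last by move=> t _; exact: abse_ge0.
  by rewrite (eq_integral (fun t => (g t)%:E))// => t _; rewrite gee0_abs ?lee_fin.
have := (ae_eq_integral_abs Q measurableT ((measurable_EFinP _ _).2 mg)).1 int_abs_g.
by apply: filterS => t /(_ I) [/g_eq0].
Qed.

Lemma integral_concentrated (f : T -> R) : measurable_fun [set: T] f ->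
  (\int[Q]_t (f t)%:E = (f t0)%:E)%E.
Proof.
move=> mf; rewrite (ae_eq_integral (cst (f t0)%:E))//.
- by rewrite integral_cst// -[RHS]mule1; congr (_ * _)%E; exact: probability_setT.
- exact/measurable_EFinP.
- by apply: filterS ae_eq_concentrated => t ->.
Qed.

End ConcentratedProbability.

Section ZeroSpread.
Variables (R : realType) (N : nat) (a : 'I_N -> nat).
Local Notation tuple := ((vlen a).-tuple R).

Lemma measurable_exp_payoff (i : 'I_N) (y : strat R a) :
  measurable_fun [set: tuple] (fun t => exp_payoff (mx_of_tuple t) i y).
Proof.
have -> : (fun t : tuple => exp_payoff (mx_of_tuple t) i y) =
    (fun t => \sum_(j : prof a) tnth t (mxvec_index i (enum_rank j)) *
                \prod_(k < N) y k (j k)).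
  apply/funext => t; apply: eq_bigr => j _.
  by rewrite /Pentry /mx_of_tuple /vec_mx !mxE.
apply: measurable_sum => j; apply: measurable_funM; last exact: measurable_cst.
exact: measurable_tnth.
Qed.

Variable m : 'rV[R]_(vlen a).

Definition tuple_of_row : tuple := [tuple m 0 k | k < vlen a].

Lemma tuple_rowK : tuple_row tuple_of_row = m.
Proof. by apply/rowP => k; rewrite !mxE tnth_mktuple. Qed.

Definition l1_dist (t : tuple) : R := \sum_(k < vlen a) `|tnth t k - m 0 k|.

Lemma l1_dist_ge0 t : 0 <= l1_dist t.
Proof. exact: sumr_ge0. Qed.

Lemma l1_dist_eq0 t : l1_dist t = 0 -> t = tuple_of_row.
Proof.
move/(psumr_eq0P (fun k _ => normr_ge0 _)) => t_m.
apply: eq_from_tnth => k; rewrite tnth_mktuple.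
by apply/eqP; rewrite -subr_eq0 -normr_eq0 t_m.
Qed.

Lemma l1_dist_row : l1_dist tuple_of_row = 0.
Proof. by rewrite /l1_dist big1 // => k _; rewrite tnth_mktuple subrr normr0. Qed.

Lemma measurable_l1_dist : measurable_fun [set: tuple] l1_dist.
Proof.
apply: measurable_sum => k; apply: measurableT_comp => //.
by apply: measurable_funB; [exact: measurable_tnth | exact: measurable_cst].
Qed.

Lemma CVaR_concentrated (Q : probability tuple R) (eps : R) (L : tuple -> R) :
  (\int[Q]_t (l1_dist t)%:E <= 0%:E)%E -> 0 < eps <= 1 ->
  measurable_fun [set: tuple] L -> CVaR Q eps L = (L tuple_of_row)%:E.
Proof.
move=> int_le0 eps01 mL.
have excessE z : (\int[Q]_t (Num.max (L t - z) 0)%:E =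
                  (Num.max (L tuple_of_row - z) 0)%:E)%E.
  apply: (@integral_concentrated _ _ _ Q _ _ measurable_l1_dist l1_dist_ge0 l1_dist_eq0 int_le0).
  apply: measurable_maxr; last exact: measurable_cst.
  by apply: measurable_funB => //; exact: measurable_cst.
apply/eqP; rewrite eq_le; apply/andP; split.
  apply: ereal_inf_lbound; exists (L tuple_of_row) => //.
  by rewrite excessE subrr maxxx mule0 adde0.
apply: le_ereal_inf_tmp => _ [z _ <-].
by rewrite excessE -EFinM -EFinD lee_fin le_add_scaled_excess.
Qed.

Variables (nr : nat) (W : 'M[R]_(nr, vlen a)) (h : 'cV[R]_nr).

Lemma dirac_in_ambiguity_set :
  in_polyhedron W h m -> ambiguity_set W h m 0 (\d_tuple_of_row).
Proof.
move=> Wm; split.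
- by rewrite /= /dirac indicE mem_set //= tuple_rowK.
- move=> k; have mcoord : measurable_fun [set: tuple] (fun t => (tnth t k)%:E).
    by apply/measurable_EFinP; exact: measurable_tnth.
  split; last by rewrite integral_dirac// diracT mul1e tnth_mktuple.
  apply/integrableP; split => //.
  rewrite integral_dirac ?diracT ?mul1e ?ltey//.
  by apply/measurable_EFinP/measurableT_comp => //; exact: measurable_tnth.
- rewrite integral_dirac //; last exact: (measurable_EFinP _ _).2 measurable_l1_dist.
  by rewrite diracT mul1e; move: l1_dist_row; rewrite /l1_dist => ->.
Qed.

Lemma worst_CVaR_zero_spread (eps : R) (i : 'I_N) (y : strat R a) :
  in_polyhedron W h m -> 0 < eps <= 1 ->
  worst_CVaR (ambiguity_set W h m 0) eps i y =
  (- exp_payoff (mx_of_tuple tuple_of_row) i y)%:E.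
Proof.
move=> Wm eps01.
have mL : measurable_fun [set: tuple] (fun t => - exp_payoff (mx_of_tuple t) i y).
  by apply: measurableT_comp => //; exact: measurable_exp_payoff.
have CVaRE Q : ambiguity_set W h m 0 Q ->
    CVaR Q eps (fun t => - exp_payoff (mx_of_tuple t) i y) =
    (- exp_payoff (mx_of_tuple tuple_of_row) i y)%:E.
  by case=> _ _ int_le0; exact: CVaR_concentrated.
apply/eqP; rewrite eq_le; apply/andP; split.
  by apply: ge_ereal_sup => _ [Q FQ <-]; rewrite CVaRE.
have dirac_in := dirac_in_ambiguity_set Wm.
by apply: ereal_sup_ubound; exists (\d_tuple_of_row); last exact: CVaRE dirac_in.
Qed.

End ZeroSpread.

Theorem proposition2 (R : realType) (N : nat) (a : 'I_N -> nat)
    (eps : 'I_N -> R) (Heps : forall i, 0 < eps i <= 1)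
    (nr : nat) (W : 'M[R]_(nr, vlen a)) (h : 'cV[R]_nr)
    (M : payoff_mx R a)
    (Hbounded : exists B : R, forall v : 'rV[R]_(vlen a),
        in_polyhedron W h v -> forall k, `|v 0 k| <= B)
    (Hm : in_polyhedron W h (mxvec M)) :
  forall x : strat R a,
    is_DROE (ambiguity_set W h (mxvec M) 0) eps x <-> is_Nash M x.
Proof.
move=> x.
have worstE i y : worst_CVaR (ambiguity_set W h (mxvec M) 0) (eps i) i y =
                  (- exp_payoff M i y)%:E.
  by rewrite worst_CVaR_zero_spread // /mx_of_tuple tuple_rowK mxvecK.
split=> -[xS x_eq]; split=> // i u u_simplex.
  by have := x_eq i u u_simplex; rewrite !worstE lee_fin lerN2.
by rewrite !worstE lee_fin lerN2; exact: x_eq.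
Qed.
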